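(* Let $\alpha>0$ and $\eta(\tau;\alpha)=\dfrac{\Phi(\tau)}{\Phi(\tau)+\Phi(\alpha(1-\tau))}$ with $\Phi(\tau)=\tau^{m+1}$. Then $\eta(\cdot;\alpha):[0,1]\to\mathbb{R}$ is a transition function, i.e., for all $\mu\in\{1,\dots,m\}$: (i) $\eta^{(\mu)}(\tau;\alpha)$ exists $\forall\tau\in[0,1]$; (ii) $\eta^{(\mu)}(0;\alpha)=\eta^{(\mu)}(1;\alpha)=0$; (iii) $\eta(0;\alpha)=0$, $\eta(1;\alpha)=1$; (iv) $\lim_{\alpha\to0}\eta(\tau;\alpha)=1$ for all $\tau\in(0,1]$.
   Context: $m\in\mathbb{N}$ is the order of the integrator dynamics considered; $\eta^{(\mu)}$ denotes the $\mu$-th derivative with respect to $\tau$. *)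

From Stdlib Require Import Reals.
From Coquelicot Require Import Coquelicot.
Open Scope R_scope.

Definition Phi (m : nat) (t : R) : R := t ^ (m + 1).

Definition eta (m : nat) (alpha : R) (t : R) : R :=
  Phi m t / (Phi m t + Phi m (alpha * (1 - t))).

From Stdlib Require Import Reals Lra Lia.
From Coquelicot Require Import Coquelicot.
Open Scope R_scope.

(* Let D be the denominator of eta; it is positive on [0,1].  Near 0,
   eta = t^(m+1) * (1/D), and near 1, eta = 1 + (t-1)^(m+1) * g with g a
   multiple of 1/D.  Both 1/D and g are differentiable to every order, and
   a factor (t-c)^k annihilates all derivatives of order < k at c, because
   the derivative of (t-c)^k h is (t-c)^(k-1) (k h + (t-c) h'), a product of
   the same shape with one power less.  The limit alpha -> 0 is continuity
   in alpha at alpha = 0, where eta = 1 for t > 0. *)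

Lemma Derive_n_S (f : R -> R) (n : nat) (x : R) :
  Derive_n f (S n) x = Derive_n (Derive f) n x.
Proof. rewrite <- Nat.add_1_r, <- Derive_n_comp. reflexivity. Qed.

Lemma ex_derive_n_SS (f : R -> R) (n : nat) (x : R) :
  ex_derive_n f (S (S n)) x <-> ex_derive_n (Derive f) (S n) x.
Proof.
  split; apply ex_derive_ext; intro t; [| symmetry]; apply Derive_n_S.
Qed.

Lemma Derive_n_S_const_plus (a : R) (f : R -> R) (n : nat) (x : R) :
  Derive_n (fun y => a + f y) (S n) x = Derive_n f (S n) x.
Proof.
  (* [Derive] is a limit of difference quotients, in which [a] cancels. *)
  rewrite !Derive_n_S. apply Derive_n_ext. intro t.
  unfold Derive. f_equal. apply Lim_ext. intro h. f_equal. ring.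
Qed.

Section DerivableUpTo.

Variable U : R -> Prop.

Definition derivable_upto (n : nat) (f : R -> R) : Prop :=
  forall k x, (k <= n)%nat -> U x -> ex_derive_n f k x.

Lemma derivable_upto_le (m n : nat) (f : R -> R) :
  (m <= n)%nat -> derivable_upto n f -> derivable_upto m f.
Proof. intros Hmn Hf k x Hk. apply Hf. lia. Qed.

Lemma derivable_upto_S (n : nat) (f : R -> R) :
  derivable_upto (S n) f <->
  (forall x, U x -> ex_derive f x) /\ derivable_upto n (Derive f).
Proof.
  split.
  - intros Hf. split.
    + intros x Ux. apply (Hf 1%nat x); [lia | exact Ux].
    + intros [|k] x Hk Ux; [exact I|].
      apply (proj1 (ex_derive_n_SS f k x)), Hf; [lia | exact Ux].
  - intros [Hf1 Hf] [|[|k]] x Hk Ux; [exact I | exact (Hf1 x Ux) |].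
    apply (proj2 (ex_derive_n_SS f k x)), Hf; [lia | exact Ux].
Qed.

Lemma derivable_upto_const (n : nat) (a : R) : derivable_upto n (fun _ => a).
Proof. intros k x _ _. apply ex_derive_n_const. Qed.

Lemma derivable_upto_id (n : nat) : derivable_upto n (fun x => x).
Proof.
  intros k x _ _. apply (ex_derive_n_ext (fun y => y ^ 1)).
  - intro y. apply pow_1.
  - apply ex_derive_n_pow.
Qed.

Hypothesis U_open : open U.

Lemma derivable_upto_ext (n : nat) (f g : R -> R) :
  (forall x, U x -> f x = g x) -> derivable_upto n f -> derivable_upto n g.
Proof.
  intros Hfg Hf k x Hk Ux. apply (ex_derive_n_ext_loc f); [|auto].
  exact (locally_open U _ U_open Hfg x Ux).
Qed.

Lemma derivable_upto_plus (n : nat) (f g : R -> R) :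
  derivable_upto n f -> derivable_upto n g -> derivable_upto n (fun x => f x + g x).
Proof.
  intros Hf Hg k x Hk Ux.
  apply ex_derive_n_plus; apply (locally_open U); auto;
    intros y Uy j Hj; [apply Hf | apply Hg]; auto; lia.
Qed.

Lemma derivable_upto_mult (n : nat) (f g : R -> R) :
  derivable_upto n f -> derivable_upto n g -> derivable_upto n (fun x => f x * g x).
Proof.
  revert f g. induction n as [|n IH]; intros f g Hf Hg.
  { intros k x Hk _. replace k with 0%nat by lia. exact I. }
  pose proof (derivable_upto_le n (S n) f ltac:(lia) Hf) as Hfn.
  pose proof (derivable_upto_le n (S n) g ltac:(lia) Hg) as Hgn.
  apply derivable_upto_S in Hf as [Hf1 Hf'], Hg as [Hg1 Hg'].
  apply derivable_upto_S. split; [intros x Ux; apply ex_derive_mult; auto|].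
  apply (derivable_upto_ext n (fun x => Derive f x * g x + f x * Derive g x)).
  - intros x Ux. symmetry. apply Derive_mult; auto.
  - apply derivable_upto_plus; apply IH; auto.
Qed.

Lemma derivable_upto_inv (n : nat) (f : R -> R) :
  (forall x, U x -> f x <> 0) ->
  derivable_upto n f -> derivable_upto n (fun x => / f x).
Proof.
  intros Hf0. induction n as [|n IH]; intros Hf.
  { intros k x Hk _. replace k with 0%nat by lia. exact I. }
  pose proof (IH (derivable_upto_le n (S n) f ltac:(lia) Hf)) as Hinv.
  apply derivable_upto_S in Hf as [Hf1 Hf'].
  apply derivable_upto_S. split; [intros x Ux; apply ex_derive_inv; auto|].
  apply (derivable_upto_ext n (fun x => (-1 * Derive f x) * (/ f x * / f x))).
  - intros x Ux. rewrite Derive_inv by auto. field. auto.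
  - apply derivable_upto_mult; [apply derivable_upto_mult|apply derivable_upto_mult];
      auto using derivable_upto_const.
Qed.

Lemma derivable_upto_pow (n p : nat) (f : R -> R) :
  derivable_upto n f -> derivable_upto n (fun x => f x ^ p).
Proof.
  intros Hf. induction p as [|p IH]; simpl.
  - apply derivable_upto_const.
  - apply derivable_upto_mult; auto.
Qed.

Lemma derivable_upto_affine (n : nat) (a b : R) :
  derivable_upto n (fun x => a * x + b).
Proof.
  apply derivable_upto_plus;
    [apply derivable_upto_mult|]; auto using derivable_upto_const, derivable_upto_id.
Qed.

Lemma Derive_n_pow_mult_eq0 (n j k : nat) (c : R) (g : R -> R) :
  U c -> derivable_upto n g -> (j <= n)%nat -> (j < k)%nat ->
  Derive_n (fun x => (x - c) ^ k * g x) j c = 0.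
Proof.
  intros Uc. revert n k g. induction j as [|j IH]; intros n k g Hg Hjn Hjk.
  { destruct k as [|k]; [lia|]. simpl. rewrite Rminus_diag. ring. }
  destruct n as [|n], k as [|k]; try lia.
  pose proof (derivable_upto_le n (S n) g ltac:(lia) Hg) as Hgn.
  apply derivable_upto_S in Hg as [Hg1 Hg'].
  rewrite Derive_n_S.
  rewrite (Derive_n_ext_loc _
             (fun x => (x - c) ^ k * (INR (S k) * g x + (x - c) * Derive g x))).
  - apply (IH n); [| lia | lia].
    apply derivable_upto_plus; apply derivable_upto_mult;
      auto using derivable_upto_const.
    apply (derivable_upto_ext n (fun x => 1 * x + - c));
      [intros; ring | apply derivable_upto_affine].
  - apply (locally_open U); auto. intros x Ux.
    apply is_derive_unique. auto_derive; [auto|].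
    change (match k with 0%nat => 1 | S _ => INR k + 1 end) with (INR (S k)).
    change (Derive (fun y => g y) x) with (Derive g x). unfold Rminus. ring.
Qed.

End DerivableUpTo.

Definition eta_den (m : nat) (alpha t : R) : R := Phi m t + Phi m (alpha * (1 - t)).

Lemma eta_den_pos (m : nat) (alpha t : R) :
  0 < alpha -> 0 <= t <= 1 -> 0 < eta_den m alpha t.
Proof.
  intros Ha Ht. unfold eta_den, Phi.
  destruct (Req_dec t 0) as [->|Ht0].
  - rewrite pow_i by lia. rewrite Rminus_0_r, Rmult_1_r.
    pose proof (pow_lt alpha (m + 1) Ha). lra.
  - assert (0 < t ^ (m + 1)) by (apply pow_lt; lra).
    assert (0 <= (alpha * (1 - t)) ^ (m + 1)) by (apply pow_le; nra). lra.
Qed.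

Lemma open_eta_den_pos (m : nat) (alpha : R) : open (fun t => 0 < eta_den m alpha t).
Proof.
  apply (open_comp (eta_den m alpha) (fun y => 0 < y)); [|apply open_gt].
  intros t _. apply (@ex_derive_continuous R_AbsRing R_NormedModule).
  unfold eta_den, Phi. auto_derive. exact I.
Qed.

Lemma derivable_upto_eta_den (U : R -> Prop) (n m : nat) (alpha : R) :
  open U -> derivable_upto U n (eta_den m alpha).
Proof.
  intros HU. unfold eta_den, Phi.
  apply (derivable_upto_plus U HU); apply (derivable_upto_pow U HU).
  - apply derivable_upto_id.
  - apply (derivable_upto_ext U HU n (fun t => - alpha * t + alpha));
      [intros; ring | apply (derivable_upto_affine U HU)].
Qed.

Section Eta.

Variables (m : nat) (alpha : R).
Let U := fun t => 0 < eta_den m alpha t.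
Let U_open : open U := open_eta_den_pos m alpha.

Lemma derivable_upto_inv_eta_den (n : nat) :
  derivable_upto U n (fun t => / eta_den m alpha t).
Proof.
  apply (derivable_upto_inv U U_open); [intros t Ht; unfold U in Ht; lra |].
  apply derivable_upto_eta_den, U_open.
Qed.

Lemma derivable_upto_eta (n : nat) : derivable_upto U n (eta m alpha).
Proof.
  apply (derivable_upto_mult U U_open); [| apply derivable_upto_inv_eta_den].
  apply (derivable_upto_pow U U_open), derivable_upto_id.
Qed.

Hypothesis alpha_pos : 0 < alpha.

Lemma Derive_n_eta_0 (mu : nat) : (mu <= m)%nat -> Derive_n (eta m alpha) mu 0 = 0.
Proof.
  intros Hmu.
  rewrite (Derive_n_ext _ (fun t => (t - 0) ^ (m + 1) * / eta_den m alpha t)).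
  - apply (Derive_n_pow_mult_eq0 U U_open mu); [| apply derivable_upto_inv_eta_den | lia | lia].
    apply eta_den_pos; lra.
  - intro t. rewrite Rminus_0_r. reflexivity.
Qed.

Lemma Derive_n_eta_1 (mu : nat) :
  (1 <= mu <= m)%nat -> Derive_n (eta m alpha) mu 1 = 0.
Proof.
  intros Hmu. destruct mu as [|j]; [lia|].
  set (g := fun t => - (- alpha) ^ (m + 1) * / eta_den m alpha t).
  rewrite (Derive_n_ext_loc _ (fun t => 1 + (t - 1) ^ (m + 1) * g t)).
  - rewrite Derive_n_S_const_plus.
    apply (Derive_n_pow_mult_eq0 U U_open (S j)); [| | lia | lia].
    + apply eta_den_pos; lra.
    + apply (derivable_upto_mult U U_open);
        [apply derivable_upto_const | apply derivable_upto_inv_eta_den].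
  - apply (locally_open U _ U_open); [| apply eta_den_pos; lra].
    intros t Ht. unfold U, g, eta, eta_den, Phi in *.
    replace (alpha * (1 - t)) with ((t - 1) * - alpha) in * by ring.
    rewrite Rpow_mult_distr in *. field. lra.
Qed.

End Eta.

Lemma eta_at_0 (m : nat) (alpha : R) : eta m alpha 0 = 0.
Proof. unfold eta, Phi. rewrite pow_i by lia. unfold Rdiv. ring. Qed.

Lemma eta_at_1 (m : nat) (alpha : R) : eta m alpha 1 = 1.
Proof.
  unfold eta, Phi. rewrite pow1, Rminus_diag, Rmult_0_r, pow_i by lia.
  rewrite Rplus_0_r. field.
Qed.

Lemma eta_cvg_alpha_0 (m : nat) (t : R) :
  0 < t -> filterlim (fun a => eta m a t) (at_right 0) (locally 1).
Proof.
  intros Ht.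
  assert (Htp : 0 < t ^ (m + 1)) by (apply pow_lt; lra).
  assert (Hcont : continuous (fun a => eta m a t) 0).
  { apply (@ex_derive_continuous R_AbsRing R_NormedModule). unfold eta, Phi.
    auto_derive. rewrite Rmult_0_l, pow_i by lia. lra. }
  assert (Heta : eta m 0 t = 1).
  { unfold eta, Phi. rewrite Rmult_0_l, pow_i, Rplus_0_r by lia. field. lra. }
  unfold continuous in Hcont. rewrite Heta in Hcont.
  eapply filterlim_filter_le_1; [apply filter_le_within | exact Hcont].
Qed.

Theorem proposition2 (m : nat) (alpha : R) (halpha : 0 < alpha) :
  (* (i) and (ii) for every mu in {1,...,m} *)
  (forall mu : nat, (1 <= mu <= m)%nat ->
     (forall t : R, 0 <= t <= 1 -> ex_derive_n (eta m alpha) mu t) /\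
     Derive_n (eta m alpha) mu 0 = 0 /\
     Derive_n (eta m alpha) mu 1 = 0) /\
  (* (iii) *)
  eta m alpha 0 = 0 /\ eta m alpha 1 = 1 /\
  (* (iv) limit as alpha -> 0 (alpha > 0) *)
  (forall t : R, 0 < t <= 1 ->
     filterlim (fun a : R => eta m a t) (at_right 0) (locally 1)).
Proof.
  split; [|split; [|split]].
  - intros mu Hmu. split; [|split].
    + intros t Ht. apply (derivable_upto_eta m alpha mu); [lia|].
      apply eta_den_pos; assumption.
    + apply Derive_n_eta_0; [assumption | lia].
    + apply Derive_n_eta_1; assumption.
  - apply eta_at_0.
  - apply eta_at_1.
  - intros t Ht. apply eta_cvg_alpha_0. lra.
Qed.
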